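(* In the setting $|H|=1$ of the context (with Assumption 1), the convex relaxation (R1) is exact (its optimal value equals $c^\star$) if the convex problem $\min\ \sum_{j\in N}x_j^2-w_1$ over $(\boldsymbol{\mu},{\bf x},w_1)\in\mathbb{R}^m\times\mathbb{R}^n\times\mathbb{R}$ subject to $d_1^*+\sum_{i\in M}\xi_i\mu_i=0$; $c_1+\sum_{i\in M}a_{i1}\mu_i=0$; $(D_{jj}-d_1^* )x_j+c_j+\sum_{i\in M}a_{ij}\mu_i=0$ for $j\in N\setminus\{1\}$; $\xi_iw_1+2\sum_{j\in N}a_{ij}x_j\le b_i$ for $i\in M$; $\mu_i\ge0$ for $i\in M$, has nonnegative optimal value (with the convention that an infeasible problem has optimal value $+\infty$).
   Context: Let $N=\{1,\dots,n\}$, $M=\{1,\dots,m\}$. Data: reals $D_{jj}$ ($j\in N$), $c_j$, $a_{ij}$, $b_i$, $\xi_i$ ($i\in M$, $j\in N$). The diagonal QCQP (P) is $c^\star=\inf\{\sum_{j}D_{jj}x_j^2+2\sum_jc_jx_j : \xi_i\sum_jx_j^2+2\sum_ja_{ij}x_j\le b_i,\ i\in M\}$, i.e. all constraint Hessians are ${\bf A}^i=\xi_i{\bf I}$. Its Shor relaxation is $v^\star=\inf\{{\bf D}\bullet{\bf X}+2{\bf c}^\top{\bf x} : \xi_i\,\mathrm{trace}({\bf X})+2{\bf a}_i^\top{\bf x}\le b_i\ (i\in M),\ {\bf X}-{\bf x}{\bf x}^\top\succeq{\bf O}\}$ with ${\bf D}=\mathrm{diag}(D_{jj})$. Assumption 1: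 (P) is feasible; some $\bar{\bf y}\ge0$ has $\sum_i\bar y_i\xi_i>0$; the Shor relaxation has a feasible point in the interior of its feasible region. It is assumed that $d_1^*=\min_{j\in N}D_{jj}$ is attained uniquely at $j=1$. The convex relaxation (R1) is: $\min\ d_1^*w_1+\sum_{j\in N}(D_{jj}-d_1^* )x_j^2+2\sum_{j\in N}c_jx_j$ s.t. $\xi_iw_1+2\sum_{j\in N}a_{ij}x_j\le b_i$ ($i\in M$), $\sum_{j\in N}x_j^2\le w_1$; its optimal value equals $v^\star$. *)

From HB Require Import structures.
From mathcomp Require Import all_boot all_order all_algebra.
From mathcomp Require Import all_classical all_reals ereal.
Set Implicit Arguments. Unset Strict Implicit. Unset Printing Implicit Defensive.
Import Order.TTheory GRing.Theory Num.Theory.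
Local Open Scope ring_scope.
Local Open Scope classical_set_scope.

Section QCQP.
Variables (R : realType) (n m : nat).
(* Index set N = {1..n} is 'I_n.+1 (index "1" of the paper is ord0);
   M = {1..m} is 'I_m. *)
Variables (D c : 'I_n.+1 -> R) (a : 'I_m -> 'I_n.+1 -> R) (b xi : 'I_m -> R).

Definition objP (x : 'I_n.+1 -> R) : R :=
  \sum_j D j * x j ^+ 2 + 2 * \sum_j c j * x j.
Definition feasP (x : 'I_n.+1 -> R) : Prop :=
  forall i, xi i * (\sum_j x j ^+ 2) + 2 * (\sum_j a i j * x j) <= b i.
Definition cstar : \bar R := ereal_inf [set (objP x)%:E | x in feasP].

Definition psd (A : 'M[R]_n.+1) : Prop :=
  forall v : 'cV[R]_n.+1, 0 <= (v^T *m A *m v) 0 0.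

Definition shor_feas (x : 'I_n.+1 -> R) (X : 'M[R]_n.+1) : Prop :=
  X^T = X /\
  (forall i, xi i * \tr X + 2 * (\sum_j a i j * x j) <= b i) /\
  psd (X - \col_j x j *m (\col_j x j)^T).

(* (x, X) lies in the interior of the Shor feasible region, taken in the
   ambient space R^n x S^n (max-norm balls) *)
Definition shor_interior (x : 'I_n.+1 -> R) (X : 'M[R]_n.+1) : Prop :=
  shor_feas x X /\
  exists2 e : R, 0 < e &
    forall (x' : 'I_n.+1 -> R) (X' : 'M[R]_n.+1), X'^T = X' ->
      (forall j, `|x' j - x j| < e) ->
      (forall j k, `|X' j k - X j k| < e) -> shor_feas x' X'.

Definition assumption1 : Prop :=
  (exists x, feasP x) /\
  (exists y : 'I_m -> R, (forall i, 0 <= y i) /\ 0 < \sum_i y i * xi i) /\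
  (exists x X, shor_interior x X).

(* d_1^* = D_11, given the hypothesis that the minimum is attained
   (uniquely) at index 1 = ord0 *)
Definition d1star : R := D ord0.

Definition objR1 (x : 'I_n.+1 -> R) (w1 : R) : R :=
  d1star * w1 + \sum_j (D j - d1star) * x j ^+ 2 + 2 * \sum_j c j * x j.
Definition feasR1 (x : 'I_n.+1 -> R) (w1 : R) : Prop :=
  (forall i, xi i * w1 + 2 * (\sum_j a i j * x j) <= b i) /\
  \sum_j x j ^+ 2 <= w1.
Definition valR1 : \bar R :=
  ereal_inf [set (objR1 p.1 p.2)%:E | p in [set p | feasR1 p.1 p.2]].

(* the auxiliary convex problem, variables (mu, x, w1);
   ereal_inf of the empty set is +oo, matching the convention *)
Definition feasAux (mu : 'I_m -> R) (x : 'I_n.+1 -> R) (w1 : R) : Prop :=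
  d1star + \sum_i xi i * mu i = 0 /\
  c ord0 + \sum_i a i ord0 * mu i = 0 /\
  (forall j, j != ord0 ->
     (D j - d1star) * x j + c j + \sum_i a i j * mu i = 0) /\
  (forall i, xi i * w1 + 2 * (\sum_j a i j * x j) <= b i) /\
  (forall i, 0 <= mu i).
Definition valAux : \bar R :=
  ereal_inf [set ((\sum_j p.1.2 j ^+ 2) - p.2)%:E
            | p in [set p | feasAux p.1.1 p.1.2 p.2]].
End QCQP.

From HB Require Import structures.
From mathcomp Require Import all_boot all_order all_algebra.
From mathcomp Require Import all_classical all_reals ereal.
From mathcomp Require Import topology normedtype derive.
From mathcomp Require Import ring lra.
Import Order.TTheory GRing.Theory Num.Theory.
Import numFieldNormedType.Exports.
Local Open Scope ring_scope.
Local Open Scope classical_set_scope.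
Set Implicit Arguments. Unset Strict Implicit. Unset Printing Implicit Defensive.

(* By Assumption 1, (R1) has a minimizer (x, w): its feasible set is
   nonempty, closed, and bounded (a nonnegative combination y of the linear
   constraints with sum_i y_i xi_i > 0 bounds w, and |x|^2 <= w bounds x).
   If |x|^2 < w, the quadratic constraint is inactive, so first-order
   optimality (no feasible descent direction) together with Farkas' lemma
   gives multipliers mu >= 0 satisfying the stationarity equations; then
   (mu, x, w) is feasible for the auxiliary problem with value |x|^2 - w < 0,
   contradicting the hypothesis.  Hence w = |x|^2, so x is feasible for (P)
   with the same objective value, and (R1) is exact. *)

Section Farkas.
Variables (R : realFieldType) (V : lmodType R).

Definition lin_form (f : V -> R) : Prop :=
  forall u v t, f (u + t *: v) = f u + t * f v.

Lemma lin_form0 f : lin_form f -> f 0 = 0.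
Proof.
move=> lf; have := lf 0 0 1; rewrite scale1r addr0 mul1r => h.
by apply: (addrI (f 0)); rewrite addr0 -h.
Qed.

Lemma lin_formN f y : lin_form f -> f (- y) = - f y.
Proof.
by move=> lf; have := lf 0 y (-1); rewrite scaleN1r add0r (lin_form0 lf) add0r mulN1r.
Qed.

Lemma lin_form_comb f g k :
  lin_form f -> lin_form g -> lin_form (fun y => f y + k * g y).
Proof. by move=> lf lg u v t; rewrite lf lg; ring. Qed.

Definition farkas_property (m : nat) : Prop :=
  forall (a : nat -> V -> R) (c : V -> R),
  (forall i, lin_form (a i)) -> lin_form c ->
  (forall y, (forall i, (i < m)%N -> a i y <= 0) -> c y <= 0) ->
  exists mu : nat -> R, (forall i, 0 <= mu i) /\
    forall y, c y = \sum_(i < m) mu i * a i y.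

(* With no inequalities, c is nonpositive everywhere, hence zero. *)
Lemma farkas0 : farkas_property 0.
Proof.
move=> a c _ lc H; exists (fun _ => 0); split=> // y; rewrite big_ord0.
have Hy z : c z <= 0 by apply: H => i; rewrite ltn0.
by apply/eqP; rewrite eq_le Hy /= -oppr_le0 -(lin_formN _ lc) Hy.
Qed.

(* Inductive step.  Either the last inequality is redundant, or some direction
   y0 violates only it; then projecting along y0 onto the hyperplane
   a_m = 0 reduces the system to m inequalities. *)
Lemma farkas_succ m : farkas_property m -> farkas_property m.+1.
Proof.
move=> IH a c la lc H.
have [[y0 [Hy0 cy0]]|Hred] :=
  pselect (exists y0, (forall i, (i < m)%N -> a i y0 <= 0) /\ 0 < c y0); last first.
  have H' y : (forall i, (i < m)%N -> a i y <= 0) -> c y <= 0.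
    by move=> Hy; rewrite leNgt; apply/negP => cy; apply: Hred; exists y.
  have [mu [mu0 Hmu]] := IH a c la lc H'.
  exists (fun i => if i == m then 0 else mu i); split=> [i|y]; first by case: eqP.
  rewrite big_ord_recr /= eqxx mul0r addr0 Hmu.
  by apply: eq_bigr => i _; rewrite ltn_eqF.
have am_pos : 0 < a m y0.
  rewrite ltNge; apply/negP => am0; move: cy0; rewrite ltNge H //.
  by move=> i; rewrite ltnS leq_eqVlt => /predU1P[->|/Hy0].
pose al := a m y0.
(* the form f read along the hyperplane a_m = 0 *)
pose proj f y := f y + - (f y0 / al) * a m y.
have lproj f : lin_form f -> lin_form (proj f) by move=> lf; exact: lin_form_comb.
have proj_eval f y : lin_form f -> f (y + - (a m y / al) *: y0) = proj f y.
  by move=> lf; rewrite lf /proj; field; rewrite gt_eqF.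
have H' y : (forall i, (i < m)%N -> proj (a i) y <= 0) -> proj c y <= 0.
  move=> Hy; rewrite -proj_eval //; apply: H => i.
  rewrite ltnS leq_eqVlt => /predU1P[->|/Hy]; last by rewrite proj_eval.
  by rewrite proj_eval // /proj -/al divff ?gt_eqF // mulN1r addrN.
have [mu [mu0 Hmu]] :=
  IH (fun i => proj (a i)) (proj c) (fun i => lproj _ (la i)) (lproj _ lc) H'.
pose lam := (c y0 - \sum_(i < m) mu i * a i y0) / al.
exists (fun i => if i == m then lam else mu i); split=> [i|y].
  case: eqP => // _; apply: divr_ge0; last exact: ltW.
  rewrite subr_ge0 (le_trans _ (ltW cy0)) //.
  by apply: sumr_le0 => k _; rewrite mulr_ge0_le0 // Hy0.
rewrite big_ord_recr /= eqxx.
under eq_bigr => k _ do rewrite /= ltn_eqF //.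
have sum_proj : \sum_(i < m) mu i * proj (a i) y =
    \sum_(i < m) mu i * a i y - (\sum_(i < m) mu i * a i y0) / al * a m y.
  rewrite /proj; under eq_bigr do rewrite mulrDr.
  rewrite big_split /= mulr_suml mulr_suml -sumrN; congr (_ + _).
  by apply: eq_bigr => i _; ring.
by move: (Hmu y); rewrite sum_proj /proj /lam !mulrBl mulNr; lra.
Qed.

Lemma farkas m : farkas_property m.
Proof. by elim: m => [|m IH]; [exact: farkas0 | exact: farkas_succ]. Qed.

End Farkas.

Lemma small_step (R : realFieldType) (A B C : R) : A < 0 ->
  exists2 t0 : R, 0 < t0 & forall t, 0 < t <= t0 -> A + t * (B + t * C) < 0.
Proof.
move=> A_neg; pose e := `|B| + `|C| + 1.
have e_pos : 0 < e by rewrite ltr_pwDr // addr_ge0.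
exists (Num.min 1 (- A / e)) => [|t /andP[t_pos]].
  by rewrite lt_min ltr01 divr_gt0 // oppr_gt0.
rewrite le_min => /andP[t_le1]; rewrite ler_pdivlMr // => te.
have BC : B + t * C <= `|B| + `|C|.
  apply: lerD; first exact: ler_norm.
  rewrite (le_trans (ler_norm _)) // normrM gtr0_norm // ler_piMl //.
have : t * (B + t * C) <= t * (`|B| + `|C|) by rewrite ler_wpM2l // ltW.
rewrite /e in te; lra.
Qed.

Section BigSums.
Variables (R : comPzRingType) (I : finType).
Implicit Types (p u v : I -> R) (t : R).

Lemma sum_axpy p u v t :
  \sum_i p i * (u i + t * v i) = \sum_i p i * u i + t * \sum_i p i * v i.
Proof. by rewrite mulr_sumr -big_split; apply: eq_bigr => i _ /=; ring. Qed.

Lemma sum_sq_axpy p u v t :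
  \sum_i p i * (u i + t * v i) ^+ 2 = \sum_i p i * u i ^+ 2
    + t * (2 * \sum_i p i * u i * v i + t * \sum_i p i * v i ^+ 2).
Proof.
rewrite mulrDr !mulrA !mulr_sumr -!big_split.
by apply: eq_bigr => i _ /=; ring.
Qed.

Lemma sum_mul_delta p (j : I) : \sum_i p i * (i == j)%:R = p j.
Proof.
rewrite (bigD1 j) //= eqxx mulr1 big1 ?addr0 // => i /negbTE ->.
by rewrite mulr0.
Qed.
End BigSums.

Lemma closed_sublevel (R : realType) (T : topologicalType) (f : T -> R) (r : R) :
  continuous f -> closed [set z | f z <= r].
Proof.
by move=> /continuous_closedP cf; apply: (cf [set u | u <= r]); exact: closed_le.
Qed.

(* Closure of continuity under the ring operations and finite sums, in the
   functional form used by the tactic coordinate_continuity below. *)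
Section PointwiseContinuity.
Variables (R : realType) (T : topologicalType).
Implicit Types f g : T -> R.

Lemma continuous_const (r : R) : continuous (fun _ : T => r).
Proof. exact: cst_continuous. Qed.

Lemma continuous_add f g :
  continuous f -> continuous g -> continuous (fun z => f z + g z).
Proof. by move=> cf cg z; apply: cvgD; [exact: cf | exact: cg]. Qed.

Lemma continuous_opp f : continuous f -> continuous (fun z => - f z).
Proof. by move=> cf z; apply: cvgN; exact: cf. Qed.

Lemma continuous_mul f g :
  continuous f -> continuous g -> continuous (fun z => f z * g z).
Proof. by move=> cf cg z; apply: cvgM; [exact: cf | exact: cg]. Qed.

Lemma continuous_sqr f : continuous f -> continuous (fun z => f z ^+ 2).
Proof.
move=> cf; have -> : (fun z => f z ^+ 2) = (fun z => f z * f z).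
  by apply: funext => z; rewrite expr2.
exact: continuous_mul.
Qed.

Lemma continuous_sum (I : Type) (s : seq I) (F : I -> T -> R) :
  (forall i, continuous (F i)) -> continuous (fun z => \sum_(i <- s) F i z).
Proof. by move=> cF; apply: continuous_big => //; exact: add_continuous. Qed.

End PointwiseContinuity.

Lemma norm_le_1_sqr (R : realFieldType) (u : R) : `|u| <= 1 + u ^+ 2.
Proof. by rewrite -(real_normK (num_real u)); nra. Qed.

Section RelaxationR1.
Variables (R : realType) (n m : nat).
Variables (D c : 'I_n.+1 -> R) (a : 'I_m -> 'I_n.+1 -> R) (b xi : 'I_m -> R).

Definition lhsR1 (i : 'I_m) (x : 'I_n.+1 -> R) (w : R) : R :=
  xi i * w + 2 * \sum_j a i j * x j.

Lemma objR1_tight (x : 'I_n.+1 -> R) :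
  objR1 D c x (\sum_j x j ^+ 2) = objP D c x.
Proof.
rewrite /objR1 /objP; congr (_ + _); rewrite mulr_sumr -big_split.
by apply: eq_bigr => j _ /=; ring.
Qed.

Lemma exact_of_tight_minimizer (x : 'I_n.+1 -> R) (w : R) :
  feasR1 a b xi x w ->
  (forall x' w', feasR1 a b xi x' w' -> objR1 D c x w <= objR1 D c x' w') ->
  w = \sum_j x j ^+ 2 ->
  valR1 D c a b xi = cstar D c a b xi.
Proof.
move=> [lin_ok _] x_min w_tight; rewrite /valR1 /cstar.
apply/le_anti/andP; split.
  apply: le_ereal_inf_tmp => _ [x0 feas_x0 <-].
  apply: ge_ereal_inf; exists (objP D c x0)%:E => //.
  by exists (x0, \sum_j x0 j ^+ 2); [split | rewrite /= objR1_tight].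
apply: (@le_trans _ _ (objP D c x)%:E).
  apply: ge_ereal_inf; exists (objP D c x)%:E => //; exists x => // i.
  by rewrite -w_tight; exact: lin_ok.
apply: le_ereal_inf_tmp => _ [p feas_p <-].
by rewrite lee_fin -objR1_tight -w_tight; exact: x_min.
Qed.

Lemma valAux_le (mu : 'I_m -> R) (x : 'I_n.+1 -> R) (w : R) :
  feasAux D c a b xi mu x w ->
  (valAux D c a b xi <= (\sum_j x j ^+ 2 - w)%:E)%E.
Proof.
move=> feas; apply: ge_ereal_inf; exists (\sum_j x j ^+ 2 - w)%:E => //.
by exists (mu, x, w).
Qed.

Lemma weighted_lhsR1 (y : 'I_m -> R) (x : 'I_n.+1 -> R) (w : R) :
  \sum_i y i * lhsR1 i x w =
  (\sum_i y i * xi i) * w + 2 * \sum_j (\sum_i y i * a i j) * x j.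
Proof.
rewrite /lhsR1; under eq_bigr do rewrite mulrDr.
rewrite big_split /= mulr_suml; congr (_ + _).
  by apply: eq_bigr => i _; rewrite mulrA.
rewrite mulr_sumr; under eq_bigr do rewrite !mulr_sumr.
rewrite exchange_big /=; apply: eq_bigr => j _.
by rewrite mulr_suml mulr_sumr; apply: eq_bigr => i _; ring.
Qed.

(* Assumption 1(ii) bounds w on the feasible set of (R1): a y-weighted sum of
   the constraints gives s w + 2 al.x <= be with s > 0, and completing the
   square absorbs the linear term into s/2 |x|^2 <= s/2 w. *)
Lemma feasR1_bounded (y : 'I_m -> R) :
  (forall i, 0 <= y i) -> 0 < \sum_i y i * xi i ->
  exists W, forall x w, feasR1 a b xi x w -> w <= W.
Proof.
move=> y_ge0; set s := \sum_i y i * xi i => s_pos.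
pose al j := \sum_i y i * a i j.
pose K := \sum_i y i * b i + 2 / s * \sum_j al j ^+ 2.
exists (2 / s * K) => x w [lin_ok norm_ok].
have agg : s * w + 2 * \sum_j al j * x j <= \sum_i y i * b i.
  rewrite -weighted_lhsR1; apply: ler_sum => i _.
  by apply: ler_wpM2l; [exact: y_ge0 | exact: lin_ok].
have square j : - (s / 2) * x j ^+ 2 - 2 / s * al j ^+ 2 <= 2 * (al j * x j).
  rewrite -subr_ge0.
  have -> : 2 * (al j * x j) - (- (s / 2) * x j ^+ 2 - 2 / s * al j ^+ 2)
          = s / 2 * (x j + 2 * al j / s) ^+ 2 by field; rewrite gt_eqF.
  by rewrite mulr_ge0 ?sqr_ge0 // divr_ge0 // ltW.
have sum_square :
    - (s / 2) * \sum_j x j ^+ 2 - 2 / s * \sum_j al j ^+ 2 <= 2 * \sum_j al j * x j.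
  by rewrite !mulr_sumr -sumrB; apply: ler_sum => j _; exact: square.
have norm_w : s / 2 * \sum_j x j ^+ 2 <= s / 2 * w.
  by rewrite ler_wpM2l // divr_ge0 // ltW.
have half_w : s / 2 * w <= K by rewrite /K; lra.
have -> : w = 2 / s * (s / 2 * w) by field; rewrite gt_eqF.
by rewrite ler_wpM2l // divr_ge0 // ltW.
Qed.

(* A pair (x, w) packed as a row vector of R^(n+1+1), to use compactness. *)
Definition rv_pack (x : 'I_n.+1 -> R) (w : R) : 'rV[R]_(n.+1 + 1) :=
  row_mx (\row_j x j) (const_mx w).
Definition rv_x (z : 'rV[R]_(n.+1 + 1)) (j : 'I_n.+1) : R := z ord0 (lshift 1 j).
Definition rv_w (z : 'rV[R]_(n.+1 + 1)) : R := z ord0 (rshift n.+1 ord0).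

Lemma rv_x_pack x w : rv_x (rv_pack x w) = x.
Proof. by apply: funext => j; rewrite /rv_x row_mxEl mxE. Qed.

Lemma rv_w_pack x w : rv_w (rv_pack x w) = w.
Proof. by rewrite /rv_w row_mxEr mxE. Qed.

Local Ltac coordinate_continuity :=
  rewrite /objR1 /lhsR1 /rv_x /rv_w; repeat match goal with
  | |- continuous (fun _ => _ + _) => apply: continuous_add
  | |- continuous (fun _ => - _) => apply: continuous_opp
  | |- continuous (fun _ => _ * _) => apply: continuous_mul
  | |- continuous (fun _ => _ ^+ 2) => apply: continuous_sqr
  | |- continuous (fun _ => \sum_(_ <- _) _) => apply: continuous_sum => ?
  | |- continuous (fun _ => _ ord0 _) => exact: coord_continuous
  | |- continuous (fun _ => _) => exact: continuous_const
  end.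

(* (R1) attains its minimum: its feasible set is closed, nonempty by
   Assumption 1(i), and bounded by feasR1_bounded. *)
Lemma R1_minimizer :
  (exists x, feasP a b xi x) ->
  (exists y : 'I_m -> R, (forall i, 0 <= y i) /\ 0 < \sum_i y i * xi i) ->
  exists x w, feasR1 a b xi x w /\
    forall x' w', feasR1 a b xi x' w' -> objR1 D c x w <= objR1 D c x' w'.
Proof.
move=> [x0 feas_x0] [y [y_ge0 y_pos]].
have [W W_bound] := feasR1_bounded y_ge0 y_pos.
pose K := [set z | feasR1 a b xi (rv_x z) (rv_w z)].
have K_pack x w : feasR1 a b xi x w -> K (rv_pack x w).
  by rewrite /K /= rv_x_pack rv_w_pack.
have K0 : K !=set0 by exists (rv_pack x0 (\sum_j x0 j ^+ 2)); apply: K_pack.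
have K_closed : closed K.
  have -> : K = \bigcap_(i in setT) [set z | lhsR1 i (rv_x z) (rv_w z) <= b i]
                `&` [set z | \sum_j rv_x z j ^+ 2 - rv_w z <= 0].
    apply/seteqP; split => z /=; rewrite subr_le0 => -[lin_ok norm_ok].
      by split=> // i _; exact: lin_ok.
    by split=> // i; exact: lin_ok.
  apply: closedI; [apply: closed_bigI => i _|];
    apply: closed_sublevel; coordinate_continuity.
have K_box : K `<=` [set z | forall k, `[- (1 + W), 1 + W]%classic (z ord0 k)].
  move=> z [lin_ok norm_ok] k /=; rewrite in_itv /= -ler_norml.
  have w_le := W_bound _ _ (conj lin_ok norm_ok).
  have norm_ge0 : 0 <= \sum_j rv_x z j ^+ 2 by rewrite sumr_ge0 // => j _; exact: sqr_ge0.
  case: (split_ordP k) => j ->; last by rewrite [j]ord1 -/(rv_w z) ger0_norm; lra.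
  have xj_le : rv_x z j ^+ 2 <= \sum_k rv_x z k ^+ 2.
    by rewrite (bigD1 j) //= lerDl sumr_ge0 // => i _; exact: sqr_ge0.
  by rewrite -/(rv_x z j); have := norm_le_1_sqr (rv_x z j); lra.
have K_compact : compact K.
  apply: (subclosed_compact K_closed _ K_box).
  exact: (@rV_compact _ _ (fun=> `[- (1 + W), 1 + W]%classic) (fun=> @segment_compact _ _ _)).
have obj_cont : continuous (fun z => objR1 D c (rv_x z) (rv_w z)).
  by coordinate_continuity.
have [z Kz z_min] := EVT_min_rV K0 K_compact (continuous_subspaceT obj_cont).
exists (rv_x z), (rv_w z); split; first by rewrite inE in Kz.
move=> x' w' feas'; have := z_min (rv_pack x' w').
by rewrite inE rv_x_pack rv_w_pack; apply; exact: K_pack.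
Qed.

Definition dobjR1 (x y : 'I_n.+1 -> R) (v : R) : R :=
  d1star D * v + 2 * \sum_j ((D j - d1star D) * x j + c j) * y j.

Lemma dobjR1_shift x y y' v v' t :
  dobjR1 x (fun j => y j + t * y' j) (v + t * v') =
  dobjR1 x y v + t * dobjR1 x y' v'.
Proof. by rewrite /dobjR1 sum_axpy; ring. Qed.

Lemma lhsR1_shift i x y w v t :
  lhsR1 i (fun j => x j + t * y j) (w + t * v) = lhsR1 i x w + t * lhsR1 i y v.
Proof. by rewrite /lhsR1 sum_axpy; ring. Qed.

Lemma sqnorm_shift (x y : 'I_n.+1 -> R) w v t :
  \sum_j (x j + t * y j) ^+ 2 - (w + t * v) =
  (\sum_j x j ^+ 2 - w) + t * (2 * \sum_j x j * y j - v + t * \sum_j y j ^+ 2).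
Proof.
have -> : \sum_j (x j + t * y j) ^+ 2 =
    \sum_j x j ^+ 2 + t * (2 * \sum_j x j * y j + t * \sum_j y j ^+ 2).
  by rewrite mulrDr !mulrA !mulr_sumr -!big_split; apply: eq_bigr => j _ /=; ring.
by ring.
Qed.

Lemma objR1_shift x y w v t :
  objR1 D c (fun j => x j + t * y j) (w + t * v) =
  objR1 D c x w + t * (dobjR1 x y v + t * \sum_j (D j - d1star D) * y j ^+ 2).
Proof.
rewrite /objR1 /dobjR1 sum_sq_axpy sum_axpy.
have -> : \sum_j ((D j - d1star D) * x j + c j) * y j =
    \sum_j (D j - d1star D) * x j * y j + \sum_j c j * y j.
  by rewrite -big_split; apply: eq_bigr => j _ /=; ring.
by ring.
Qed.

(* First-order optimality at a minimizer of (R1) where |x|^2 < w: any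
   direction (y, v) satisfying the linearized constraints, in which the slack
   s_i of each constraint is weighted by some tau >= 0, is not a descent
   direction.  Otherwise a small step along it stays feasible and lowers the
   objective. *)
Lemma no_descent x w y v (tau : R) :
  feasR1 a b xi x w ->
  (forall x' w', feasR1 a b xi x' w' -> objR1 D c x w <= objR1 D c x' w') ->
  \sum_j x j ^+ 2 < w -> 0 <= tau ->
  (forall i, lhsR1 i y v <= (b i - lhsR1 i x w) * tau) ->
  0 <= dobjR1 x y v.
Proof.
move=> [lin_ok _] x_min slack tau_ge0 dir_ok.
rewrite leNgt; apply/negP => descent.
have [t1 t1_pos obj_down] :=
  small_step (\sum_j (D j - d1star D) * y j ^+ 2) 0 descent.
have [t2 t2_pos norm_down] := small_step (2 * \sum_j x j * y j - v)
  (\sum_j y j ^+ 2) (ltac:(by rewrite subr_lt0) : \sum_j x j ^+ 2 - w < 0).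
have [t3 t3_pos tau_small] := small_step tau 0 (ltrN10 R).
pose t := Num.min t1 (Num.min t2 t3).
have t_pos : 0 < t by rewrite !lt_min t1_pos t2_pos t3_pos.
have [t_t1 t_t2 t_t3] : [/\ t <= t1, t <= t2 & t <= t3].
  by rewrite !ge_min !lexx !orbT.
have t_in t0 : t <= t0 -> 0 < t <= t0 by move=> ->; rewrite t_pos.
have feas' : feasR1 a b xi (fun j => x j + t * y j) (w + t * v).
  split=> [i|].
    have := tau_small t (t_in _ t_t3); rewrite mulr0 addr0 => t_tau.
    have s_ge0 : 0 <= b i - lhsR1 i x w by rewrite subr_ge0; exact: lin_ok.
    have step_le : t * lhsR1 i y v <= t * ((b i - lhsR1 i x w) * tau).
      by rewrite (ler_pM2l t_pos); exact: dir_ok.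
    have slack_le : (b i - lhsR1 i x w) * (t * tau) <= (b i - lhsR1 i x w).
      by apply: ler_piMr => //; lra.
    rewrite -[_ <= _]/(lhsR1 i _ _ <= b i) lhsR1_shift; nra.
  by have := norm_down t (t_in _ t_t2); rewrite -sqnorm_shift subr_lt0 => /ltW.
have := x_min _ _ feas'; rewrite objR1_shift lerDl.
have := obj_down t (t_in _ t_t1); rewrite mulr0 addr0 => neg.
by rewrite leNgt pmulr_rlt0 ?neg.
Qed.

(* Lagrange stationarity: at a minimizer of (R1) with |x|^2 < w, Farkas'
   lemma applied to the directions of no_descent, written in the variables
   ((y, v), tau), gives multipliers mu >= 0 with
   - dobjR1 x y v = sum_i mu_i lhsR1 i y v for every direction (y, v). *)
Lemma lagrange_multipliers x w :
  feasR1 a b xi x w ->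
  (forall x' w', feasR1 a b xi x' w' -> objR1 D c x w <= objR1 D c x' w') ->
  \sum_j x j ^+ 2 < w ->
  exists mu : nat -> R, (forall i, 0 <= mu i) /\
    forall y v, - dobjR1 x y v = \sum_(i < m) mu i * lhsR1 i y v.
Proof.
move=> feas x_min slack.
pose V := ((('I_n.+1 -> R) * R) * R)%type.
pose s i := b i - lhsR1 i x w.
(* the constraints lhsR1 i y v - s_i tau <= 0 on directions, then - tau <= 0 *)
pose A k (p : V) :=
  if insub k is Some i then lhsR1 i p.1.1 p.1.2 - s i * p.2 else - p.2.
pose C (p : V) := - dobjR1 x p.1.1 p.1.2.
have shift_y (u u' : V) t : (u + t *: u').1.1 = (fun j => u.1.1 j + t * u'.1.1 j).
  by [].
have shift_v (u u' : V) t : (u + t *: u').1.2 = u.1.2 + t * u'.1.2 by [].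
have shift_tau (u u' : V) t : (u + t *: u').2 = u.2 + t * u'.2 by [].
have lin_A k : lin_form (A k).
  move=> u u' t; rewrite /A shift_y shift_v shift_tau.
  by case: insub => [i|]; rewrite ?lhsR1_shift; ring.
have lin_C : lin_form C.
  by move=> u u' t; rewrite /C shift_y shift_v dobjR1_shift; ring.
have A_last p : A m p = - p.2 by rewrite /A insubN ?ltnn.
have A_val (i : 'I_m) p : A i p = lhsR1 i p.1.1 p.1.2 - s i * p.2.
  by rewrite /A valK.
have dir p : (forall k, (k < m.+1)%N -> A k p <= 0) -> C p <= 0.
  case: p => [[y v] tau] Hp; rewrite /C oppr_le0.
  have tau_ge0 : 0 <= tau by rewrite -oppr_le0 -(A_last ((y, v), tau)) Hp.
  apply: (no_descent feas x_min slack tau_ge0) => i.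
  by move: (Hp i (ltnW (ltn_ord i))); rewrite A_val subr_le0 [s i * _]mulrC.
have [mu [mu_ge0 mu_eq]] := farkas lin_A lin_C dir.
exists mu; split=> // y v.
rewrite [LHS](mu_eq ((y, v), 0)) big_ord_recr /= A_last oppr0 mulr0 addr0.
by apply: eq_bigr => i _; rewrite A_val mulr0 subr0.
Qed.

(* Reading the stationarity identity on the unit directions of x and of w
   gives exactly the equations of the auxiliary problem. *)
Lemma kkt_multipliers x w :
  feasR1 a b xi x w ->
  (forall x' w', feasR1 a b xi x' w' -> objR1 D c x w <= objR1 D c x' w') ->
  \sum_j x j ^+ 2 < w ->
  exists mu, feasAux D c a b xi mu x w.
Proof.
move=> feas x_min slack.
have [mu [mu_ge0 stat]] := lagrange_multipliers feas x_min slack.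
have stat_coord j : (D j - d1star D) * x j + c j + \sum_i a i j * mu i = 0.
  have := stat (fun k => (k == j)%:R) 0.
  rewrite /dobjR1 /lhsR1 sum_mul_delta mulr0 add0r.
  under eq_bigr do rewrite sum_mul_delta mulr0 add0r mulrCA [mu _ * _]mulrC.
  by rewrite -mulr_sumr => h; lra.
have zero_sum (p : 'I_n.+1 -> R) : \sum_j p j * 0 = 0.
  by rewrite big1 // => j _; rewrite mulr0.
exists (fun i => mu i); split; [|split; [|split; [|split]]].
- have := stat (fun=> 0) 1; rewrite /dobjR1 /lhsR1 zero_sum mulr0 addr0 mulr1.
  under eq_bigr do rewrite zero_sum mulr0 addr0 mulr1 mulrC.
  by move=> h; lra.
- by have := stat_coord ord0; rewrite /d1star subrr mul0r add0r.
- by move=> j _; exact: stat_coord.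
- exact: feas.1.
- by move=> i; exact: mu_ge0.
Qed.

End RelaxationR1.

Theorem proposition4 (R : realType) (n m : nat)
  (D c : 'I_n.+1 -> R) (a : 'I_m -> 'I_n.+1 -> R) (b xi : 'I_m -> R) :
  assumption1 a b xi ->
  (forall j : 'I_n.+1, j != ord0 -> D ord0 < D j) ->
  (0 <= valAux D c a b xi)%E ->
  valR1 D c a b xi = cstar D c a b xi.
Proof.
move=> [feas_P [weights _]] _ valAux_ge0.
have [x [w [feas_xw xw_min]]] := R1_minimizer D c feas_P weights.
apply: (exact_of_tight_minimizer feas_xw xw_min).
apply/eqP; rewrite eq_le; apply/andP; split; last by case: feas_xw.
rewrite leNgt; apply/negP => slack.
have [mu feas_aux] := kkt_multipliers feas_xw xw_min slack.
have := le_trans valAux_ge0 (valAux_le feas_aux).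
by rewrite lee_fin subr_ge0 leNgt slack.
Qed.
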